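(* Let $G$ be a cubical $\omega$-category with connections and $n\ge1$. Let $\Phi_n:\square G_{n-1}\to\square G_{n-1}$ be $\Phi_n=\psi_1(\psi_2\psi_1)(\psi_3\psi_2\psi_1)\cdots(\psi_{n-1}\cdots\psi_1)$, with $\psi_j$ acting on shells as described in the context. Then $x\mapsto(\partial x,\Phi_nx)$ is a bijection from $G_n$ to the pull-back $\{(z,y)\in\square G_{n-1}\times\Phi_n(G_n):\Phi_nz=\partial y\}$.
   Context: A cubical $\omega$-category with connections $G$ consists of sets $G_n$ ($n\ge0$), face maps $\partial^\alpha_i:G_n\to G_{n-1}$, degeneracies $\varepsilon_i:G_{n-1}\to G_n$, connections $\Gamma^\alpha_i:G_n\to G_{n+1}$ ($1\le i\le n$, $\alpha=\pm$) and partial compositions $\circ_j$ on $G_n$ ($1\le j\le n$, $a\circ_jb$ defined iff $\partial^+_ja=\partial^-_jb$) satisfying: $\partial^\alpha_i\partial^\beta_j=\partial^\beta_{j-1}\partial^\alpha_i$ ($i<j$), $\varepsilon_i\varepsilon_j=\varepsilon_{j+1}\varepsilon_i$ ($i\le j$), $\partial^\alpha_i\varepsilon_j=\varepsilon_{j-1}\partial^\alpha_i$ ($i<j$), $\varepsilon_j\partial^\alpha_{i-1}$ ($i>j$), $\mathrm{id}$ ($i=j$); $\Gamma^\alpha_i\Gamma^\beta_j=\Gamma^\beta_{j+1}\Gamma^\alpha_i$ ($i<j$), $\Gamma^\alpha_i\Gamma^\alpha_i=\Gamma^\alpha_{i+1}\Gamma^\alpha_i$, $\Gamma^\alpha_i\varepsilon_j=\varepsilon_{j+1}\Gamma^\alpha_i$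 ($i<j$), $\varepsilon_j\Gamma^\alpha_{i-1}$ ($i>j$), $\Gamma^\alpha_j\varepsilon_j=\varepsilon_{j+1}\varepsilon_j$, $\partial^\alpha_i\Gamma^\beta_j=\Gamma^\beta_{j-1}\partial^\alpha_i$ ($i<j$), $\Gamma^\beta_j\partial^\alpha_{i-1}$ ($i>j+1$), $\partial^\alpha_j\Gamma^\alpha_j=\partial^\alpha_{j+1}\Gamma^\alpha_j=\mathrm{id}$, $\partial^\alpha_j\Gamma^{-\alpha}_j=\partial^\alpha_{j+1}\Gamma^{-\alpha}_j=\varepsilon_j\partial^\alpha_j$; $\partial^-_j(a\circ_jb)=\partial^-_ja$, $\partial^+_j(a\circ_jb)=\partial^+_jb$, $\partial^\alpha_i(a\circ_jb)=\partial^\alpha_ia\circ_{j-1}\partial^\alpha_ib$ ($i<j$), $\partial^\alpha_ia\circ_j\partial^\alpha_ib$ ($i>j$); interchange $(a\circ_ib)\circ_j(c\circ_id)=(a\circ_jc)\circ_i(b\circ_jd)$ for $i\ne j$; $\varepsilon_i(a\circ_jb)=\varepsilon_ia\circ_{j+1}\varepsilon_ib$ ($i\le j$), $\varepsilon_ia\circ_j\varepsilon_ib$ ($i>j$); $\Gamma^\alpha_i(a\circ_jb)=\Gamma^\alpha_ia\circ_{j+1}\Gamma^\alpha_ib$ ($i<j$), $\Gamma^\alpha_ia\circ_j\Gamma^\alpha_ib$ ($i>j$); $\Gamma^+_j(a\circ_jb)=(\Gamma^+_ja\circ_j\varepsilon_ja)\circ_{j+1}(\varepsilon_{j+1}a\circ_j\Gamma^+_jb)$,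 $\Gamma^-_j(a\circ_jb)=(\Gamma^-_ja\circ_j\varepsilon_{j+1}b)\circ_{j+1}(\varepsilon_jb\circ_j\Gamma^-_jb)$; each $\circ_j$ is a category structure with identities $\varepsilon_jy$; $\Gamma^+_ix\circ_i\Gamma^-_ix=\varepsilon_{i+1}x$, $\Gamma^+_ix\circ_{i+1}\Gamma^-_ix=\varepsilon_ix$. Folding operations on $G_m$: $\psi_ix=\Gamma^+_i\partial^-_{i+1}x\circ_{i+1}x\circ_{i+1}\Gamma^-_i\partial^+_{i+1}x$ ($1\le i\le m-1$), $\Psi_r=\psi_{r-1}\cdots\psi_1$, $\Phi_n=\Psi_1\Psi_2\cdots\Psi_n$. An $n$-shell is a $2n$-tuple $z=(z^-_1,z^+_1,\dots,z^-_n,z^+_n)$ of elements of $G_{n-1}$ with $\partial^\alpha_iz^\beta_j=\partial^\beta_{j-1}z^\alpha_i$ for $i<j$; $\square G_{n-1}$ is the set of $n$-shells, and $\partial:G_n\to\square G_{n-1}$ is $\partial x=(\partial^-_1x,\partial^+_1x,\dots,\partial^-_nx,\partial^+_nx)$. For $1\le j\le n-1$ the map $\psi_j:\square G_{n-1}\to\square G_{n-1}$ sends $z$ to $w$ with $w^\alpha_i=\psi_{j-1}z^\alpha_i$ ($i<j$), $w^-_j=z^-_j\circ_jz^+_{j+1}$, $w^+_j=z^-_{j+1}\circ_jz^+_j$, $w^\alpha_{j+1}=\varepsilon_j\partial^\alpha_jz^\alpha_{j+1}$, $w^\alpha_i=\psi_jz^\alpha_i$ ($i>j+1$); this is a well-defined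 map of shells satisfying $\psi_j\partial=\partial\psi_j$. *)

From mathcomp Require Import ssreflect ssrfun ssrbool eqtype ssrnat.


(* Conventions:
   - cell n    = G_n
   - face n i a : G_{n+1} -> G_n   is  \partial^a_i  (a = true for +, false for -)
   - degen n i  : G_n -> G_{n+1}   is  \varepsilon_i
   - conn n i a : G_n -> G_{n+1}   is  \Gamma^a_i
   - comp n j a b : G_n             is  a \circ_j b  (total function; only
     meaningful when defined, i.e. when face _ j true a = face _ j false b;
     all axioms about composites assume definedness).
   Indices are 1-based natural numbers; the axioms are only imposed for
   indices in the ranges given in the paper. *)

Record cubcat := CubCat {
  cell : nat -> Type;
  face : forall n, nat -> bool -> cell n.+1 -> cell n;
  degen : forall n, nat -> cell n -> cell n.+1;
  conn : forall n, nat -> bool -> cell n -> cell n.+1;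
  comp : forall n, nat -> cell n -> cell n -> cell n;

  ax_ff : forall n i j a b (x : cell n.+2), 1 <= i -> i < j -> j <= n.+2 ->
    face n i a (face n.+1 j b x) = face n j.-1 b (face n.+1 i a x);
  ax_ee : forall n i j (x : cell n), 1 <= i -> i <= j -> j <= n.+1 ->
    degen n.+1 i (degen n j x) = degen n.+1 j.+1 (degen n i x);
  ax_fe_lt : forall n i j a (x : cell n.+1), 1 <= i -> i < j -> j <= n.+2 ->
    face n.+1 i a (degen n.+1 j x) = degen n j.-1 (face n i a x);
  ax_fe_gt : forall n i j a (x : cell n.+1), 1 <= j -> j < i -> i <= n.+2 ->
    face n.+1 i a (degen n.+1 j x) = degen n j (face n i.-1 a x);
  ax_fe_eq : forall n j a (x : cell n), 1 <= j <= n.+1 ->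
    face n j a (degen n j x) = x;

  ax_cc_lt : forall n i j a b (x : cell n), 1 <= i -> i < j -> j <= n ->
    conn n.+1 i a (conn n j b x) = conn n.+1 j.+1 b (conn n i a x);
  ax_cc_eq : forall n i a (x : cell n), 1 <= i <= n ->
    conn n.+1 i a (conn n i a x) = conn n.+1 i.+1 a (conn n i a x);
  ax_ce_lt : forall n i j a (x : cell n), 1 <= i -> i < j -> j <= n.+1 ->
    conn n.+1 i a (degen n j x) = degen n.+1 j.+1 (conn n i a x);
  ax_ce_gt : forall n i j a (x : cell n), 1 <= j -> j < i -> i <= n.+1 ->
    conn n.+1 i a (degen n j x) = degen n.+1 j (conn n i.-1 a x);
  ax_ce_eq : forall n j a (x : cell n), 1 <= j <= n.+1 ->
    conn n.+1 j a (degen n j x) = degen n.+1 j.+1 (degen n j x);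
  ax_fc_lt : forall n i j a b (x : cell n.+1), 1 <= i -> i < j -> j <= n.+1 ->
    face n.+1 i a (conn n.+1 j b x) = conn n j.-1 b (face n i a x);
  ax_fc_gt : forall n i j a b (x : cell n.+1), 1 <= j -> j.+1 < i -> i <= n.+2 ->
    face n.+1 i a (conn n.+1 j b x) = conn n j b (face n i.-1 a x);
  ax_fc_id : forall n j a (x : cell n), 1 <= j <= n ->
    face n j a (conn n j a x) = x /\ face n j.+1 a (conn n j a x) = x;
  ax_fc_deg : forall n j a (x : cell n.+1), 1 <= j <= n.+1 ->
    face n.+1 j a (conn n.+1 j (~~ a) x) = degen n j (face n j a x) /\
    face n.+1 j.+1 a (conn n.+1 j (~~ a) x) = degen n j (face n j a x);

  ax_comp_f : forall n j (a b : cell n.+1), 1 <= j <= n.+1 ->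
    face n j true a = face n j false b ->
    face n j false (comp n.+1 j a b) = face n j false a /\
    face n j true (comp n.+1 j a b) = face n j true b;
  ax_comp_f_lt : forall n i j c (a b : cell n.+2), 1 <= i -> i < j -> j <= n.+2 ->
    face n.+1 j true a = face n.+1 j false b ->
    face n.+1 i c (comp n.+2 j a b) = comp n.+1 j.-1 (face n.+1 i c a) (face n.+1 i c b);
  ax_comp_f_gt : forall n i j c (a b : cell n.+2), 1 <= j -> j < i -> i <= n.+2 ->
    face n.+1 j true a = face n.+1 j false b ->
    face n.+1 i c (comp n.+2 j a b) = comp n.+1 j (face n.+1 i c a) (face n.+1 i c b);
  ax_interchange : forall n i j (a b c d : cell n.+1),
    1 <= i <= n.+1 -> 1 <= j <= n.+1 -> i != j ->
    face n i true a = face n i false b -> face n i true c = face n i false d ->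
    face n j true a = face n j false c -> face n j true b = face n j false d ->
    comp n.+1 j (comp n.+1 i a b) (comp n.+1 i c d)
    = comp n.+1 i (comp n.+1 j a c) (comp n.+1 j b d);
  ax_e_comp_le : forall n i j (a b : cell n.+1), 1 <= i -> i <= j -> j <= n.+1 ->
    face n j true a = face n j false b ->
    degen n.+1 i (comp n.+1 j a b) = comp n.+2 j.+1 (degen n.+1 i a) (degen n.+1 i b);
  ax_e_comp_gt : forall n i j (a b : cell n.+1), 1 <= j -> j < i -> i <= n.+2 ->
    face n j true a = face n j false b ->
    degen n.+1 i (comp n.+1 j a b) = comp n.+2 j (degen n.+1 i a) (degen n.+1 i b);
  ax_conn_comp_lt : forall n i j c (a b : cell n.+1), 1 <= i -> i < j -> j <= n.+1 ->
    face n j true a = face n j false b ->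
    conn n.+1 i c (comp n.+1 j a b) = comp n.+2 j.+1 (conn n.+1 i c a) (conn n.+1 i c b);
  ax_conn_comp_gt : forall n i j c (a b : cell n.+1), 1 <= j -> j < i -> i <= n.+1 ->
    face n j true a = face n j false b ->
    conn n.+1 i c (comp n.+1 j a b) = comp n.+2 j (conn n.+1 i c a) (conn n.+1 i c b);
  ax_conn_comp_plus : forall n j (a b : cell n.+1), 1 <= j <= n.+1 ->
    face n j true a = face n j false b ->
    conn n.+1 j true (comp n.+1 j a b)
    = comp n.+2 j.+1 (comp n.+2 j (conn n.+1 j true a) (degen n.+1 j a))
                     (comp n.+2 j (degen n.+1 j.+1 a) (conn n.+1 j true b));
  ax_conn_comp_minus : forall n j (a b : cell n.+1), 1 <= j <= n.+1 ->
    face n j true a = face n j false b ->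
    conn n.+1 j false (comp n.+1 j a b)
    = comp n.+2 j.+1 (comp n.+2 j (conn n.+1 j false a) (degen n.+1 j.+1 b))
                     (comp n.+2 j (degen n.+1 j b) (conn n.+1 j false b));

  ax_assoc : forall n j (a b c : cell n.+1), 1 <= j <= n.+1 ->
    face n j true a = face n j false b -> face n j true b = face n j false c ->
    comp n.+1 j (comp n.+1 j a b) c = comp n.+1 j a (comp n.+1 j b c);
  ax_unit : forall n j (a : cell n.+1), 1 <= j <= n.+1 ->
    comp n.+1 j (degen n j (face n j false a)) a = a /\
    comp n.+1 j a (degen n j (face n j true a)) = a;

  ax_conn_inv : forall n i (x : cell n), 1 <= i <= n ->
    comp n.+1 i (conn n i true x) (conn n i false x) = degen n i.+1 x /\
    comp n.+1 i.+1 (conn n i true x) (conn n i false x) = degen n i x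
}.

Arguments face {c0 n}.
Arguments degen {c0 n}.
Arguments conn {c0 n}.
Arguments comp {c0 n}.

Set Implicit Arguments.
Unset Strict Implicit.
Unset Printing Implicit Defensive.

Section Folding.
Variable C : cubcat.

Definition fold_psi (m : nat) (i : nat) (x : cell C m.+1) : cell C m.+1 :=
  comp i.+1 (comp i.+1 (conn i true (face i.+1 false x)) x)
            (conn i false (face i.+1 true x)).

(* Psi_r = psi_{r-1} ... psi_1  (psi_1 applied first); Psi_0 = Psi_1 = id *)
Fixpoint PsiF (T : Type) (f : nat -> T -> T) (r : nat) (x : T) : T :=
  match r with
  | 0 => x
  | r'.+1 => if r' is 0 then x else f r' (PsiF f r' x)
  end.

(* Phi_n = Psi_1 Psi_2 ... Psi_n  (Psi_n applied first) *)
Fixpoint PhiF (T : Type) (f : nat -> T -> T) (n : nat) (x : T) : T :=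
  match n with
  | 0 => x
  | n'.+1 => PhiF f n' (PsiF f n'.+1 x)
  end.

Definition Phi (m : nat) (x : cell C m.+1) : cell C m.+1 :=
  PhiF (@fold_psi m) m.+1 x.

(* families z^a_i (i = 1..n, a = -/+) of elements of G_m; an n-shell of
   G_{n-1} (n = m+1) is such a family (entries i = 1..m+1 relevant)
   satisfying the shell condition *)
Definition sh (m : nat) := nat -> bool -> cell C m.

Definition is_shell (m : nat) : sh m -> Prop :=
  match m as m0 return sh m0 -> Prop with
  | 0 => fun _ => True
  | k.+1 => fun z => forall i j a b, 1 <= i -> i < j -> j <= k.+2 ->
                      face i a (z j b) = face j.-1 b (z i a)
  end.

Definition shell_eq (m : nat) (z w : sh m) : Prop :=
  forall i a, 1 <= i <= m.+1 -> z i a = w i a.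

Definition bdry (m : nat) (x : cell C m.+1) : sh m := fun i a => face i a x.

Definition shell_psi (m : nat) : nat -> sh m -> sh m :=
  match m as m0 return nat -> sh m0 -> sh m0 with
  | 0 => fun _ z => z
  | k.+1 => fun j z i a =>
      if i < j then @fold_psi k j.-1 (z i a)
      else if i == j then
        (if a then comp j (z j.+1 false) (z j true)
              else comp j (z j false) (z j.+1 true))
      else if i == j.+1 then degen j (face j a (z j.+1 a))
      else @fold_psi k j (z i a)
  end.

Definition shell_Phi (m : nat) (z : sh m) : sh m :=
  PhiF (@shell_psi m) m.+1 z.

End Folding.

(* Once the boundary is known, the folding psi_j loses no information: writing
   l, r, a, b for the faces d^-_j x, d^+_j x, d^-_(j+1) x, d^+_(j+1) x,
     x = (eps_j l o_(j+1) Gamma^+_j b) o_j psi_j x o_j (Gamma^-_j a o_(j+1) eps_j r),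
   and for a shell z and a cell y with psi_j z = d y the right-hand side, built from
   the entries of z, is a cell with boundary z that folds to y.  So x |-> (d x, psi_j x)
   is a bijection onto the pull-back of psi_j along d; this property is stable under
   composition, and Phi_n is a composite of foldings psi_j. *)

From mathcomp Require Import ssreflect ssrfun ssrbool eqtype ssrnat.
From mathcomp Require Import zify.

Set Implicit Arguments.
Unset Strict Implicit.
Unset Printing Implicit Defensive.

Arguments ax_ff {c0 n}.
Arguments ax_ee {c0 n}.
Arguments ax_fe_lt {c0 n}.
Arguments ax_fe_gt {c0 n}.
Arguments ax_fe_eq {c0 n}.
Arguments ax_fc_lt {c0 n}.
Arguments ax_fc_gt {c0 n}.
Arguments ax_fc_id {c0 n}.
Arguments ax_fc_deg {c0 n}.
Arguments ax_comp_f {c0 n}.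
Arguments ax_comp_f_lt {c0 n}.
Arguments ax_comp_f_gt {c0 n}.
Arguments ax_interchange {c0 n}.
Arguments ax_e_comp_le {c0 n}.
Arguments ax_assoc {c0 n}.
Arguments ax_unit {c0 n}.
Arguments ax_conn_inv {c0 n}.

Local Ltac side := try lia; try done.
(* [uconstr] leaves the implicit [cubcat] argument of the axioms to the rewrite. *)
Local Tactic Notation "rw" uconstr(t) := rewrite t /=; side.

Section Folding.
Variable C : cubcat.

Lemma face_conn n j a (x : cell C n) : 1 <= j <= n -> face j a (conn j a x) = x.
Proof. by case/(ax_fc_id j a x). Qed.
Lemma faceS_conn n j a (x : cell C n) : 1 <= j <= n -> face j.+1 a (conn j a x) = x.
Proof. by case/(ax_fc_id j a x). Qed.
Lemma face_connN n j a (x : cell C n.+1) : 1 <= j <= n.+1 ->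
  face j a (conn j (~~ a) x) = degen j (face j a x).
Proof. by case/(ax_fc_deg j a x). Qed.
Lemma faceS_connN n j a (x : cell C n.+1) : 1 <= j <= n.+1 ->
  face j.+1 a (conn j (~~ a) x) = degen j (face j a x).
Proof. by case/(ax_fc_deg j a x). Qed.

Section Composable.
Variables (n j : nat) (a b : cell C n.+1).
Hypotheses (hj : 1 <= j <= n.+1) (hab : face j true a = face j false b).

Lemma face_compl : face j false (comp j a b) = face j false a.
Proof. by case: (ax_comp_f j a b hj hab). Qed.
Lemma face_compr : face j true (comp j a b) = face j true b.
Proof. by case: (ax_comp_f j a b hj hab). Qed.
Lemma compS_degen : comp j.+1 (degen j a) (degen j b) = degen j (comp j a b).
Proof. by rewrite (ax_e_comp_le j j a b) //; lia. Qed.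
End Composable.

Lemma comp_idl n j u (a : cell C n.+1) : 1 <= j <= n.+1 -> u = face j false a ->
  comp j (degen j u) a = a.
Proof. by move=> h ->; case: (ax_unit j a h). Qed.
Lemma comp_idr n j u (a : cell C n.+1) : 1 <= j <= n.+1 -> u = face j true a ->
  comp j a (degen j u) = a.
Proof. by move=> h ->; case: (ax_unit j a h). Qed.
Lemma degenS_degen n j (x : cell C n) : 1 <= j <= n.+1 ->
  degen j.+1 (degen j x) = degen j (degen j x).
Proof. by move=> h; rewrite (ax_ee j j x) //; lia. Qed.
Lemma comp_conn n j (x : cell C n) : 1 <= j <= n ->
  comp j (conn j true x) (conn j false x) = degen j.+1 x.
Proof. by case/(ax_conn_inv j x). Qed.
Lemma compS_conn n j (x : cell C n) : 1 <= j <= n ->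
  comp j.+1 (conn j true x) (conn j false x) = degen j x.
Proof. by case/(ax_conn_inv j x). Qed.

Section FoldFaces.
Variables (m i : nat) (x : cell C m.+2).
Hypothesis hi : 1 <= i <= m.+1.

Lemma fold_psi_defl :
  face i.+1 true (conn i true (face i.+1 false x)) = face i.+1 false x.
Proof. exact: faceS_conn. Qed.
Lemma fold_psi_defr :
  face i.+1 true (comp i.+1 (conn i true (face i.+1 false x)) x)
  = face i.+1 false (conn i false (face i.+1 true x)).
Proof. by rewrite face_compr ?fold_psi_defl ?faceS_conn; side. Qed.

Lemma face_minus_fold_psi :
  face i false (fold_psi i x) = comp i (face i false x) (face i.+1 true x).
Proof.
rewrite /fold_psi ax_comp_f_lt /=; side; last exact: fold_psi_defr.
rewrite ax_comp_f_lt /=; side; last exact: fold_psi_defl.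
by rw face_conn; rw face_connN; rw comp_idl; rw ax_ff.
Qed.
Lemma face_plus_fold_psi :
  face i true (fold_psi i x) = comp i (face i.+1 false x) (face i true x).
Proof.
rewrite /fold_psi ax_comp_f_lt /=; side; last exact: fold_psi_defr.
rewrite ax_comp_f_lt /=; side; last exact: fold_psi_defl.
by rw face_conn; rw face_connN; rw comp_idr; rw face_compr; rw ax_ff.
Qed.
Lemma faceS_fold_psi a :
  face i.+1 a (fold_psi i x) = degen i (face i a (face i.+1 a x)).
Proof.
rewrite /fold_psi; case: a.
- by rewrite face_compr; side; [rw faceS_connN | exact: fold_psi_defr].
- rewrite face_compl; side; last exact: fold_psi_defr.
  by rewrite face_compl; side; [rw faceS_connN | exact: fold_psi_defl].
Qed.
End FoldFaces.

Lemma face_fold_psi_lt m i p a (x : cell C m.+2) : 1 <= p <= i -> i.+1 <= m.+1 ->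
  face p a (fold_psi i.+1 x) = fold_psi i (face p a x).
Proof.
move=> hp hi; rewrite /fold_psi.
rewrite ax_comp_f_lt /=; side; last by apply: fold_psi_defr; lia.
rewrite ax_comp_f_lt /=; side; last by apply: fold_psi_defl; lia.
by rw ax_fc_lt; rw ax_fc_lt; rewrite !(ax_ff p i.+2); side.
Qed.
Lemma face_fold_psi_gt m i p a (x : cell C m.+2) : 1 <= i -> i.+1 < p -> p <= m.+2 ->
  face p a (fold_psi i x) = fold_psi i (face p a x).
Proof.
move=> h1 h2 h3; rewrite /fold_psi.
rewrite ax_comp_f_gt; side; last by apply: fold_psi_defr; lia.
rewrite ax_comp_f_gt; side; last by apply: fold_psi_defl; lia.
by rw ax_fc_gt; rw ax_fc_gt; rewrite -!(ax_ff i.+1 p); side.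
Qed.

Definition unfold_head n j (l b : cell C n.+1) : cell C n.+2 :=
  comp j.+1 (degen j l) (conn j true b).
Definition unfold_tail n j (a r : cell C n.+1) : cell C n.+2 :=
  comp j.+1 (conn j false a) (degen j r).
Definition unfold_psi n j (l r a b : cell C n.+1) (y : cell C n.+2) : cell C n.+2 :=
  comp j (unfold_head j l b) (comp j y (unfold_tail j a r)).

Section UnfoldFaces.
Variables (n j : nat) (l r a b : cell C n.+1).
Hypothesis hj : 1 <= j <= n.+1.

Lemma unfold_head_def : face j true l = face j false b ->
  face j.+1 true (degen j l) = face j.+1 false (conn j true b).
Proof. by move=> e; rw ax_fe_gt; rw faceS_connN; rewrite e. Qed.
Lemma unfold_tail_def : face j true a = face j false r ->
  face j.+1 true (conn j false a) = face j.+1 false (degen j r).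
Proof. by move=> e; rw ax_fe_gt; rw faceS_connN; rewrite e. Qed.

Hypothesis hlb : face j true l = face j false b.
Hypothesis har : face j true a = face j false r.

Lemma face_minus_unfold_head : face j false (unfold_head j l b) = l.
Proof.
rewrite /unfold_head ax_comp_f_lt /=; side; last exact: unfold_head_def.
by rw ax_fe_eq; rw face_connN; rw comp_idr.
Qed.
Lemma face_plus_unfold_head : face j true (unfold_head j l b) = comp j l b.
Proof.
rewrite /unfold_head ax_comp_f_lt /=; side; last exact: unfold_head_def.
by rw ax_fe_eq; rw face_conn.
Qed.
Lemma faceS_minus_unfold_head :
  face j.+1 false (unfold_head j l b) = degen j (face j false l).
Proof. by rewrite /unfold_head face_compl; side; [rw ax_fe_gt | exact: unfold_head_def]. Qed.
Lemma faceS_plus_unfold_head : face j.+1 true (unfold_head j l b) = b.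
Proof. by rewrite /unfold_head face_compr; side; [rw faceS_conn | exact: unfold_head_def]. Qed.

Lemma face_minus_unfold_tail : face j false (unfold_tail j a r) = comp j a r.
Proof.
rewrite /unfold_tail ax_comp_f_lt /=; side; last exact: unfold_tail_def.
by rw ax_fe_eq; rw face_conn.
Qed.
Lemma face_plus_unfold_tail : face j true (unfold_tail j a r) = r.
Proof.
rewrite /unfold_tail ax_comp_f_lt /=; side; last exact: unfold_tail_def.
by rw ax_fe_eq; rw face_connN; rw comp_idl.
Qed.
Lemma faceS_minus_unfold_tail : face j.+1 false (unfold_tail j a r) = a.
Proof. by rewrite /unfold_tail face_compl; side; [rw faceS_conn | exact: unfold_tail_def]. Qed.
Lemma faceS_plus_unfold_tail :
  face j.+1 true (unfold_tail j a r) = degen j (face j true r).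
Proof. by rewrite /unfold_tail face_compr; side; [rw ax_fe_gt | exact: unfold_tail_def]. Qed.
End UnfoldFaces.

Section UnfoldFold.
Variables (m j : nat) (x : cell C m.+2).
Hypothesis hj : 1 <= j <= m.+1.
Let l := face j false x.
Let r := face j true x.
Let a := face j.+1 false x.
Let b := face j.+1 true x.

Let hlb : face j true l = face j false b.
Proof. by rewrite /l /b (ax_ff j j.+1); side. Qed.
Let har : face j true a = face j false r.
Proof. by rewrite /a /r (ax_ff j j.+1); side. Qed.
Let hbr : face j true b = face j true r.
Proof. by rewrite /b /r (ax_ff j j.+1); side. Qed.

Lemma comp_fold_psi_unfold_tail :
  comp j (fold_psi j x) (unfold_tail j a r) = comp j.+1 x (conn j false b).
Proof.
set t := unfold_tail j a r.
have ht : t = comp j.+1 t (degen j.+1 (face j.+1 true t)) by rw comp_idr.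
have d1 := fold_psi_defr x hj; rewrite -/a -/b in d1.
have d2 : face j.+1 true t = face j.+1 false (degen j.+1 (face j.+1 true t)).
  by rw ax_fe_eq.
have d3 : face j true (comp j.+1 (conn j true a) x) = face j false t.
  rewrite face_minus_unfold_tail // ax_comp_f_lt /=; side; last by rw faceS_conn.
  by rw face_conn.
have d4 : face j true (conn j false b) = face j false (degen j.+1 (face j.+1 true t)).
  rw face_connN; rw ax_fe_lt; rewrite faceS_plus_unfold_tail //.
  by rw ax_fe_eq; rewrite hbr.
rewrite {1}ht /fold_psi -/a -/b (ax_interchange j.+1 j); side.
rewrite {1}/t /unfold_tail (ax_interchange j.+1 j); side; first last.
- by rw ax_fe_eq.
- by rw face_conn; rw face_conn.
- exact: unfold_tail_def.
- by rw faceS_conn.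
rw comp_conn; rw comp_idr; rw comp_idl.
rewrite faceS_plus_unfold_tail //; rw degenS_degen; rw comp_idr.
by rw face_connN; rewrite hbr.
Qed.

Lemma unfold_fold_psi : unfold_psi j l r a b (fold_psi j x) = x.
Proof.
rewrite /unfold_psi comp_fold_psi_unfold_tail /unfold_head.
rewrite (ax_interchange j.+1 j); side; first last.
- by rw face_conn; rw face_conn.
- by rw ax_fe_eq.
- by rw faceS_conn.
- exact: unfold_head_def.
by rw comp_conn; rw comp_idl; rw comp_idr.
Qed.
End UnfoldFold.

Section UnfoldPsiFaces.
Variables (n j : nat) (l r a b : cell C n.+1) (y : cell C n.+2).
Hypothesis hj : 1 <= j <= n.+1.
Hypothesis hlb : face j true l = face j false b.
Hypothesis har : face j true a = face j false r.
Hypothesis hy_plus : face j true y = comp j a r.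
Hypothesis hy_minus : face j false y = comp j l b.

Lemma unfold_psi_defr : face j true y = face j false (unfold_tail j a r).
Proof. by rewrite face_minus_unfold_tail. Qed.
Lemma unfold_psi_defl :
  face j true (unfold_head j l b) = face j false (comp j y (unfold_tail j a r)).
Proof.
by rewrite face_plus_unfold_head // face_compl; side; exact: unfold_psi_defr.
Qed.

Lemma face_minus_unfold_psi : face j false (unfold_psi j l r a b y) = l.
Proof.
rewrite /unfold_psi face_compl; side; last exact: unfold_psi_defl.
exact: face_minus_unfold_head.
Qed.
Lemma face_plus_unfold_psi : face j true (unfold_psi j l r a b y) = r.
Proof.
rewrite /unfold_psi face_compr; side; last exact: unfold_psi_defl.
rewrite face_compr; side; last exact: unfold_psi_defr.
exact: face_plus_unfold_tail.
Qed.
Lemma faceS_minus_unfold_psi :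
  face j.+1 false y = degen j (face j false a) -> face j false l = face j false a ->
  face j.+1 false (unfold_psi j l r a b y) = a.
Proof.
move=> hyS hla.
rewrite /unfold_psi ax_comp_f_gt; side; last exact: unfold_psi_defl.
rewrite ax_comp_f_gt; side; last exact: unfold_psi_defr.
rewrite faceS_minus_unfold_head // faceS_minus_unfold_tail // hyS.
by rw comp_idl; rw comp_idl.
Qed.
Lemma faceS_plus_unfold_psi :
  face j.+1 true y = degen j (face j true b) -> face j true b = face j true r ->
  face j.+1 true (unfold_psi j l r a b y) = b.
Proof.
move=> hyS hbr.
rewrite /unfold_psi ax_comp_f_gt; side; last exact: unfold_psi_defl.
rewrite ax_comp_f_gt; side; last exact: unfold_psi_defr.
rewrite faceS_plus_unfold_head // faceS_plus_unfold_tail // hyS -hbr.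
by rw comp_idl; [rw comp_idr | rw ax_fe_eq].
Qed.
End UnfoldPsiFaces.

Lemma face_unfold_head_lt n j p c (l b : cell C n.+2) : 1 <= p <= j -> j.+1 <= n.+2 ->
  face j.+1 true l = face j.+1 false b ->
  face p c (unfold_head j.+1 l b) = unfold_head j (face p c l) (face p c b).
Proof.
move=> hp hj hlb; rewrite /unfold_head ax_comp_f_lt /=; side.
  by rw ax_fe_lt; rw ax_fc_lt.
by apply: unfold_head_def; side.
Qed.
Lemma face_unfold_tail_lt n j p c (a r : cell C n.+2) : 1 <= p <= j -> j.+1 <= n.+2 ->
  face j.+1 true a = face j.+1 false r ->
  face p c (unfold_tail j.+1 a r) = unfold_tail j (face p c a) (face p c r).
Proof.
move=> hp hj har; rewrite /unfold_tail ax_comp_f_lt /=; side.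
  by rw ax_fe_lt; rw ax_fc_lt.
by apply: unfold_tail_def; side.
Qed.
Lemma face_unfold_head_gt n j p c (l b : cell C n.+2) : 1 <= j -> j.+1 < p -> p <= n.+3 ->
  face j true l = face j false b ->
  face p c (unfold_head j l b) = unfold_head j (face p.-1 c l) (face p.-1 c b).
Proof.
move=> h1 h2 h3 hlb; rewrite /unfold_head ax_comp_f_gt /=; side.
  by rw ax_fe_gt; rw ax_fc_gt.
by apply: unfold_head_def; side.
Qed.
Lemma face_unfold_tail_gt n j p c (a r : cell C n.+2) : 1 <= j -> j.+1 < p -> p <= n.+3 ->
  face j true a = face j false r ->
  face p c (unfold_tail j a r) = unfold_tail j (face p.-1 c a) (face p.-1 c r).
Proof.
move=> h1 h2 h3 har; rewrite /unfold_tail ax_comp_f_gt /=; side.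
  by rw ax_fe_gt; rw ax_fc_gt.
by apply: unfold_tail_def; side.
Qed.

Section UnfoldPsiFacesOff.
Variables (n j : nat) (l r a b : cell C n.+2) (y : cell C n.+3).

Lemma face_unfold_psi_lt p c : 1 <= p <= j -> j.+1 <= n.+2 ->
  face j.+1 true l = face j.+1 false b -> face j.+1 true a = face j.+1 false r ->
  face j.+1 true y = comp j.+1 a r -> face j.+1 false y = comp j.+1 l b ->
  face p c (unfold_psi j.+1 l r a b y)
  = unfold_psi j (face p c l) (face p c r) (face p c a) (face p c b) (face p c y).
Proof.
move=> hp hj hlb har hyp hym.
rewrite /unfold_psi ax_comp_f_lt /=; side; last by apply: unfold_psi_defl; side.
rewrite ax_comp_f_lt /=; side; last by apply: unfold_psi_defr; side.
by rewrite face_unfold_head_lt // face_unfold_tail_lt.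
Qed.

Lemma face_unfold_psi_gt p c : 1 <= j -> j.+1 < p -> p <= n.+3 ->
  face j true l = face j false b -> face j true a = face j false r ->
  face j true y = comp j a r -> face j false y = comp j l b ->
  face p c (unfold_psi j l r a b y) = unfold_psi j (face p.-1 c l) (face p.-1 c r)
    (face p.-1 c a) (face p.-1 c b) (face p c y).
Proof.
move=> h1 h2 h3 hlb har hyp hym.
rewrite /unfold_psi ax_comp_f_gt /=; side; last by apply: unfold_psi_defl; side.
rewrite ax_comp_f_gt /=; side; last by apply: unfold_psi_defr; side.
by rewrite face_unfold_head_gt // face_unfold_tail_gt.
Qed.
End UnfoldPsiFacesOff.

Section FoldUnfold.
Variables (n j : nat) (l r a b : cell C n.+1) (y : cell C n.+2).
Hypothesis hj : 1 <= j <= n.+1.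
Hypothesis hlb : face j true l = face j false b.
Hypothesis har : face j true a = face j false r.
Hypothesis hy_plus : face j true y = comp j a r.
Hypothesis hy_minus : face j false y = comp j l b.
Hypothesis hyS_minus : face j.+1 false y = degen j (face j false a).
Hypothesis hyS_plus : face j.+1 true y = degen j (face j true b).
Hypothesis hla : face j false l = face j false a.
Hypothesis hbr : face j true b = face j true r.

(* Gamma^+_j a cancels the Gamma^-_j a of the tail, leaving
   eps_j (a o_j r) = eps_j (d^+_j y). *)
Lemma compS_conn_unfold_psi :
  comp j.+1 (conn j true a) (unfold_psi j l r a b y) = comp j (unfold_head j l b) y.
Proof.
set u := degen j (degen j (face j false a)).
have hua : comp j u (conn j true a) = conn j true a by rw comp_idl; rw face_connN.
have hu_plus : face j true u = face j false (conn j true a) by rw ax_fe_eq; rw face_connN.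
have huS_plus : face j.+1 true u = degen j (face j false a) by rw ax_fe_gt; rw ax_fe_eq.
have hu : u = degen j.+1 (degen j (face j false a)) by rw degenS_degen.
have hy_tail : face j true y = face j false (unfold_tail j a r).
  exact: unfold_psi_defr.
have hhead : face j true (unfold_head j l b) = face j false (comp j y (unfold_tail j a r)).
  exact: unfold_psi_defl.
rewrite -{1}hua -{1}hua /unfold_psi.
have d1 : face j true u = face j false (comp j u (conn j true a)).
  by rewrite face_compl; side; rewrite !ax_fe_eq; side.
have d2 : face j.+1 true u = face j.+1 false (unfold_head j l b).
  by rewrite huS_plus faceS_minus_unfold_head // hla.
have d3 : face j.+1 true (comp j u (conn j true a))
          = face j.+1 false (comp j y (unfold_tail j a r)).
  rewrite ax_comp_f_gt; side; rewrite ax_comp_f_gt; side.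
  by rewrite huS_plus faceS_minus_unfold_tail // hyS_minus faceS_conn; side.
rewrite (ax_interchange j j.+1); side.
rewrite {1}hu comp_idl; side; last by rewrite faceS_minus_unfold_head // hla.
have d4 : face j.+1 true u = face j.+1 false y by rewrite huS_plus hyS_minus.
have d5 : face j.+1 true (conn j true a) = face j.+1 false (unfold_tail j a r).
  by rewrite faceS_minus_unfold_tail // faceS_conn; side.
rewrite (ax_interchange j j.+1); side.
rewrite {1}hu comp_idl; side.
have d6 : face j.+1 true (conn j false a) = face j.+1 false (degen j r).
  exact: unfold_tail_def.
have d7 : face j.+1 true (conn j true a) = face j.+1 false (conn j false a).
  by rw faceS_conn; rw faceS_conn.
rewrite /unfold_tail -(ax_assoc j.+1); side.
by rw compS_conn; rw compS_degen; rewrite -hy_plus; rw comp_idr.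
Qed.

Lemma fold_unfold_psi : fold_psi j (unfold_psi j l r a b y) = y.
Proof.
rewrite /fold_psi faceS_minus_unfold_psi // faceS_plus_unfold_psi //.
rewrite compS_conn_unfold_psi.
set c := conn j false b.
have hc : comp j c (degen j (face j true c)) = c by rw comp_idr.
rewrite -{1}hc.
have d1 : face j.+1 true y = face j.+1 false (degen j (face j true c)).
  by rewrite hyS_plus ax_fe_gt; side; rewrite /c face_connN; side; rw ax_fe_eq.
have d2 : face j.+1 true (unfold_head j l b) = face j.+1 false c.
  by rewrite faceS_plus_unfold_head // /c faceS_conn; side.
have d3 : face j true c = face j false (degen j (face j true c)) by rw ax_fe_eq.
have d4 : face j true (unfold_head j l b) = face j false y.
  by rewrite face_plus_unfold_head // hy_minus.
rewrite (ax_interchange j j.+1); side.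
have d5 : face j.+1 true (conn j true b) = face j.+1 false (conn j false b).
  by rw faceS_conn; rw faceS_conn.
have d6 := unfold_head_def hj hlb.
rewrite /unfold_head /c (ax_assoc j.+1); side.
rw compS_conn; rw compS_degen; rewrite -hy_minus.
rewrite face_connN; side; rewrite -degenS_degen; side; rewrite comp_idr; side.
by rw comp_idl.
Qed.
End FoldUnfold.

Section ShellPsi.
Variables (k j : nat) (z : sh C k.+1).

Lemma shell_psi_lt i a : i < j.+1 -> shell_psi j.+1 z i a = fold_psi j (z i a).
Proof. by move=> h; rewrite /shell_psi /= h. Qed.
Lemma shell_psi_minus : shell_psi j z j false = comp j (z j false) (z j.+1 true).
Proof. by rewrite /shell_psi /= ltnn eqxx. Qed.
Lemma shell_psi_plus : shell_psi j z j true = comp j (z j.+1 false) (z j true).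
Proof. by rewrite /shell_psi /= ltnn eqxx. Qed.
Lemma shell_psiS a : shell_psi j z j.+1 a = degen j (face j a (z j.+1 a)).
Proof. by rewrite /shell_psi /= ltnNge leqnSn /= eqn_leq ltnn /= eqxx. Qed.
Lemma shell_psi_gt i a : j.+1 < i -> shell_psi j z i a = fold_psi j (z i a).
Proof.
move=> h; rewrite /shell_psi /= ifF; last lia.
by rewrite ifF; [rewrite ifF //|]; apply/eqP; lia.
Qed.
End ShellPsi.

Lemma shell_eq_sym m (z w : sh C m) : shell_eq z w -> shell_eq w z.
Proof. by move=> e i a hi; rewrite e. Qed.
Lemma shell_eq_trans m (z w v : sh C m) : shell_eq z w -> shell_eq w v -> shell_eq z v.
Proof. by move=> e1 e2 i a hi; rewrite e1 // e2. Qed.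

Lemma bdry_is_shell m (x : cell C m.+1) : is_shell (bdry x).
Proof. by case: m x => [|k] x //= p q a b hp hpq hq; apply: ax_ff. Qed.

Lemma shell_psi_eq m j (z z' : sh C m) : j <= m -> shell_eq z z' ->
  shell_eq (shell_psi j z) (shell_psi j z').
Proof.
case: m z z' => [|k] z z' hj e i a hi /=; first exact: e.
have ez p b : 1 <= p <= k.+2 -> z p b = z' p b by move=> hp; apply: e.
case: ifP => [_|_]; first by rewrite ez.
case: ifP => [/eqP eij | _]; first by subst i; case: a; rewrite !ez //; lia.
by case: ifP => [/eqP eij | _]; [subst i|]; rewrite ez //; lia.
Qed.

Lemma shell_psi_bdry k j (x : cell C k.+2) : 1 <= j <= k.+1 ->
  shell_eq (shell_psi j (bdry x)) (bdry (fold_psi j x)).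
Proof.
move=> hj i a hi; rewrite /bdry.
have [hij|hij|->] := ltngtP i j.
- case: j hj hij => [|j] hj hij; first lia.
  by rewrite shell_psi_lt // face_fold_psi_lt //; lia.
- have [hij2|->] : j.+1 < i \/ i = j.+1 by lia.
  + by rewrite shell_psi_gt // face_fold_psi_gt //; lia.
  + by rewrite shell_psiS faceS_fold_psi.
- by case: a;
    rewrite ?shell_psi_plus ?face_plus_fold_psi ?shell_psi_minus ?face_minus_fold_psi.
Qed.

Lemma shell_face k (z : sh C k.+1) (hz : is_shell z) p q a b :
  1 <= p -> p < q -> q <= k.+2 -> face p a (z q b) = face q.-1 b (z p a).
Proof. exact: hz. Qed.
Arguments shell_face {k z} hz p q a b.

Lemma shell_psi_shell_diag k j (z : sh C k.+1) a b : 1 <= j <= k.+1 -> is_shell z ->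
  face j a (shell_psi j z j.+1 b) = face j b (shell_psi j z j a).
Proof.
move=> hj hz.
have d1 : face j true (z j false) = face j false (z j.+1 true).
  by rewrite (shell_face hz j j.+1); side.
have d2 : face j true (z j.+1 false) = face j false (z j true).
  by rewrite (shell_face hz j j.+1); side.
rewrite shell_psiS ax_fe_eq; side.
by case: a; rewrite ?shell_psi_plus ?shell_psi_minus;
  case: b; rewrite ?face_compr ?face_compl //; side; rewrite (shell_face hz j j.+1); side.
Qed.

Section ShellPsiShell.
Variables (k j : nat) (z : sh C k.+2).
Hypothesis hj : j.+1 <= k.+2.
Hypothesis hz : is_shell z.

Lemma shell_psi_shell_low p q a b : 1 <= p -> p < q -> q <= j.+1 ->
  face p a (shell_psi j.+1 z q b) = face q.-1 b (shell_psi j.+1 z p a).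
Proof.
move=> hp hpq hq; rewrite [shell_psi _ _ p _]shell_psi_lt; side.
have [hqj|->] : q < j.+1 \/ q = j.+1 by lia.
  have [j' ej] : exists j', j = j'.+1 by exists j.-1; lia.
  rewrite shell_psi_lt // ej !face_fold_psi_lt; side.
  by rewrite (shell_face hz); side.
have d1 : face j.+1 true (z j.+1 false) = face j.+1 false (z j.+2 true).
  by rewrite (shell_face hz j.+1 j.+2); side.
have d2 : face j.+1 true (z j.+2 false) = face j.+1 false (z j.+1 true).
  by rewrite (shell_face hz j.+1 j.+2); side.
case: b;
  rewrite ?shell_psi_plus ?face_plus_fold_psi ?shell_psi_minus ?face_minus_fold_psi /=;
  side; rewrite ax_comp_f_lt /=; side.
all: by rewrite (shell_face hz p j.+1) ?(shell_face hz p j.+2); side.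
Qed.

Lemma shell_psi_shell_edge p a b : 1 <= p <= j.+1 ->
  face p a (shell_psi j.+1 z j.+2 b) = face j.+1 b (shell_psi j.+1 z p a).
Proof.
move=> hp; have [hpj|->] : p < j.+1 \/ p = j.+1 by lia.
  rewrite shell_psiS shell_psi_lt // ax_fe_lt /=; side.
  rewrite (ax_ff p j.+1) /=; side; rewrite (shell_face hz p j.+2) /=; side.
  by rewrite faceS_fold_psi; side.
by apply: shell_psi_shell_diag; side.
Qed.

Lemma shell_psi_shell_mid p q a b : 1 <= p <= j.+1 -> j.+2 < q -> q <= k.+3 ->
  face p a (shell_psi j.+1 z q b) = face q.-1 b (shell_psi j.+1 z p a).
Proof.
move=> hp hjq hq; rewrite shell_psi_gt; side.
have [hpj|->] : p < j.+1 \/ p = j.+1 by lia.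
  rewrite shell_psi_lt // face_fold_psi_lt; side.
  by rewrite face_fold_psi_gt; side; rewrite (shell_face hz p q); side.
have d1 : face j.+1 true (z j.+1 false) = face j.+1 false (z j.+2 true).
  by rewrite (shell_face hz j.+1 j.+2); side.
have d2 : face j.+1 true (z j.+2 false) = face j.+1 false (z j.+1 true).
  by rewrite (shell_face hz j.+1 j.+2); side.
case: a.
- rewrite shell_psi_plus face_plus_fold_psi; side; rewrite ax_comp_f_gt; side.
  by rewrite (shell_face hz j.+1 q) ?(shell_face hz j.+2 q); side.
- rewrite shell_psi_minus face_minus_fold_psi; side; rewrite ax_comp_f_gt; side.
  by rewrite (shell_face hz j.+1 q) ?(shell_face hz j.+2 q); side.
Qed.

Lemma shell_psi_shell_high p q a b : j.+1 < p -> p < q -> q <= k.+3 ->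
  face p a (shell_psi j.+1 z q b) = face q.-1 b (shell_psi j.+1 z p a).
Proof.
move=> hjp hpq hq; rewrite [shell_psi _ _ q _]shell_psi_gt; side.
have [->|hp] : p = j.+2 \/ j.+2 < p by lia.
  rewrite shell_psiS ax_fe_gt; side; rewrite faceS_fold_psi; side.
  by rewrite (shell_face hz j.+2 q) ?(ax_ff j.+1 q.-1); side.
rewrite shell_psi_gt ?face_fold_psi_gt; side.
by rewrite (shell_face hz p q); side.
Qed.
End ShellPsiShell.

Lemma shell_psi_is_shell k j (z : sh C k.+1) : 1 <= j <= k.+1 -> is_shell z ->
  is_shell (shell_psi j z).
Proof.
case: k z => [|k] z hj hz p q a b hp hpq hq.
  have [-> -> ->] : [/\ j = 1, p = 1 & q = 2] by split; lia.
  exact: shell_psi_shell_diag.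
case: j hj => [|j] hj; first lia.
have [hqj|hjq] := leqP q j.+1; first by apply: shell_psi_shell_low; side.
have [hpj|hjp] := leqP p j.+1; last by apply: shell_psi_shell_high; side.
have [->|hq2] : q = j.+2 \/ j.+2 < q by lia.
  by apply: shell_psi_shell_edge; side.
by apply: shell_psi_shell_mid; side.
Qed.

Lemma fold_psi_inj k j (x x' : cell C k.+2) : 1 <= j <= k.+1 ->
  shell_eq (bdry x) (bdry x') -> fold_psi j x = fold_psi j x' -> x = x'.
Proof.
rewrite /shell_eq /bdry => hj e ef.
by rewrite -(unfold_fold_psi x hj) -(unfold_fold_psi x' hj) ef !e; side.
Qed.

Definition unfold_at k j (z : sh C k.+1) (y : cell C k.+2) : cell C k.+2 :=
  unfold_psi j (z j false) (z j true) (z j.+1 false) (z j.+1 true) y.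

Section UnfoldAt.
Variables (k j : nat) (z : sh C k.+1) (y : cell C k.+2).
Hypothesis hj : 1 <= j <= k.+1.
Hypothesis hz : is_shell z.
Hypothesis e : shell_eq (shell_psi j z) (bdry y).

Let ey i a : 1 <= i <= k.+2 -> shell_psi j z i a = face i a y.
Proof. exact: e. Qed.

Let hlb : face j true (z j false) = face j false (z j.+1 true).
Proof. by rewrite (shell_face hz j j.+1); side. Qed.
Let har : face j true (z j.+1 false) = face j false (z j true).
Proof. by rewrite (shell_face hz j j.+1); side. Qed.
Let hla : face j false (z j false) = face j false (z j.+1 false).
Proof. by rewrite (shell_face hz j j.+1); side. Qed.
Let hbr : face j true (z j.+1 true) = face j true (z j true).
Proof. by rewrite (shell_face hz j j.+1); side. Qed.
Let hy_plus : face j true y = comp j (z j.+1 false) (z j true).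
Proof. by rewrite -ey ?shell_psi_plus; side. Qed.
Let hy_minus : face j false y = comp j (z j false) (z j.+1 true).
Proof. by rewrite -ey ?shell_psi_minus; side. Qed.
Let hyS_minus : face j.+1 false y = degen j (face j false (z j.+1 false)).
Proof. by rewrite -ey ?shell_psiS; side. Qed.
Let hyS_plus : face j.+1 true y = degen j (face j true (z j.+1 true)).
Proof. by rewrite -ey ?shell_psiS; side. Qed.

Lemma fold_unfold_at : fold_psi j (unfold_at j z y) = y.
Proof. exact: fold_unfold_psi. Qed.
Lemma face_unfold_at c : face j c (unfold_at j z y) = z j c.
Proof. by case: c; [apply: face_plus_unfold_psi | apply: face_minus_unfold_psi]. Qed.
Lemma faceS_unfold_at c : face j.+1 c (unfold_at j z y) = z j.+1 c.
Proof. by case: c; [apply: faceS_plus_unfold_psi | apply: faceS_minus_unfold_psi]. Qed.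
End UnfoldAt.

Section UnfoldAtOff.
Variables (k j : nat) (z : sh C k.+2) (y : cell C k.+3).
Hypothesis hj : j.+1 <= k.+2.
Hypothesis hz : is_shell z.
Hypothesis e : shell_eq (shell_psi j.+1 z) (bdry y).

Let ey i a : 1 <= i <= k.+3 -> shell_psi j.+1 z i a = face i a y.
Proof. exact: e. Qed.
Let hlb : face j.+1 true (z j.+1 false) = face j.+1 false (z j.+2 true).
Proof. by rewrite (shell_face hz j.+1 j.+2); side. Qed.
Let har : face j.+1 true (z j.+2 false) = face j.+1 false (z j.+1 true).
Proof. by rewrite (shell_face hz j.+1 j.+2); side. Qed.
Let hy_plus : face j.+1 true y = comp j.+1 (z j.+2 false) (z j.+1 true).
Proof. by rewrite -ey ?shell_psi_plus; side. Qed.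
Let hy_minus : face j.+1 false y = comp j.+1 (z j.+1 false) (z j.+2 true).
Proof. by rewrite -ey ?shell_psi_minus; side. Qed.

Lemma face_unfold_at_off i c : 1 <= i <= k.+3 -> i != j.+1 -> i != j.+2 ->
  face i c (unfold_at j.+1 z y) = z i c.
Proof.
move=> hi hij hij2; rewrite /unfold_at.
have [hlt|hgt] : i < j.+1 \/ j.+2 < i by lia.
  rewrite face_unfold_psi_lt; side.
  rewrite -ey; side; rewrite shell_psi_lt // !(shell_face hz i); side.
  by apply: unfold_fold_psi; lia.
rewrite face_unfold_psi_gt; side.
rewrite -ey; side; rewrite shell_psi_gt //.
rewrite -!(shell_face hz j.+1 i) -?(shell_face hz j.+2 i); side.
by apply: unfold_fold_psi; lia.
Qed.
End UnfoldAtOff.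

Lemma bdry_unfold_at k j (z : sh C k.+1) y : 1 <= j <= k.+1 -> is_shell z ->
  shell_eq (shell_psi j z) (bdry y) -> shell_eq (bdry (unfold_at j z y)) z.
Proof.
move=> hj hz e i c hi; rewrite /bdry.
have [->|hij] := eqVneq i j; first exact: face_unfold_at.
have [->|hij1] := eqVneq i j.+1; first exact: faceS_unfold_at.
case: k z y hj hz e hi => [|k] z y hj hz e hi; first lia.
case: j hj e hij hij1 => [|j] hj e hij hij1; first lia.
exact: face_unfold_at_off.
Qed.

(* x |-> (bdry x, FC x) is a bijection onto {(z, y) | is_shell z, FS z = bdry y};
   [pb_eq] and [pb_shell] make the notion stable under composition. *)
Record pullback_bijective m (FS : sh C m -> sh C m) (FC : cell C m.+1 -> cell C m.+1)
    : Prop := PullbackBijective {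
  pb_eq : forall z z', shell_eq z z' -> shell_eq (FS z) (FS z');
  pb_bdry : forall x, shell_eq (FS (bdry x)) (bdry (FC x));
  pb_shell : forall z, is_shell z -> is_shell (FS z);
  pb_inj : forall x x', shell_eq (bdry x) (bdry x') -> FC x = FC x' -> x = x';
  pb_surj : forall z y, is_shell z -> shell_eq (FS z) (bdry y) ->
    exists x, shell_eq (bdry x) z /\ FC x = y
}.

Lemma pullback_bijective_id m : pullback_bijective (@id (sh C m)) id.
Proof.
split=> // z y _ e.
by exists y; split=> //; apply: shell_eq_sym.
Qed.

Lemma pullback_bijective_comp m FS FC GS GC :
  @pullback_bijective m FS FC -> pullback_bijective GS GC ->
  pullback_bijective (GS \o FS) (GC \o FC).
Proof.
move=> [FSe FSb FSs FCi FCs] [GSe GSb GSs GCi GCs]; split=> /=.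
- by move=> z z' e; apply/GSe/FSe.
- by move=> x; apply: shell_eq_trans (GSb (FC x)); apply/GSe/FSb.
- by move=> z hz; apply/GSs/FSs.
- move=> x x' e efg; apply: FCi => //; apply: GCi efg.
  apply: shell_eq_trans (shell_eq_sym (FSb x)) _.
  exact: shell_eq_trans (FSe _ _ e) (FSb x').
- move=> z y hz e; have [w [ew <-]] := GCs _ _ (FSs _ hz) e.
  have [x [ex <-]] := FCs _ _ hz (shell_eq_sym ew).
  by exists x.
Qed.

Lemma pullback_bijective_psi k j : 1 <= j <= k.+1 ->
  pullback_bijective (@shell_psi C k.+1 j) (@fold_psi C k.+1 j).
Proof.
move=> hj; split.
- by move=> z z'; apply: shell_psi_eq; lia.
- by move=> x; apply: shell_psi_bdry.
- by move=> z; apply: shell_psi_is_shell.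
- by move=> x x'; apply: fold_psi_inj.
- move=> z y hz e; exists (unfold_at j z y).
  by split; [apply: bdry_unfold_at | apply: fold_unfold_at].
Qed.

Section Iterates.
Variable m : nat.
Hypothesis hpsi : forall j, 1 <= j <= m ->
  pullback_bijective (@shell_psi C m j) (@fold_psi C m j).

Lemma pullback_bijective_PsiF r : r <= m.+1 ->
  pullback_bijective (PsiF (@shell_psi C m) r) (PsiF (@fold_psi C m) r).
Proof.
elim: r => [|[|r] IH] hr; try exact: pullback_bijective_id.
exact: (pullback_bijective_comp (IH (ltnW hr)) (hpsi _)).
Qed.

Lemma pullback_bijective_PhiF n : n <= m.+1 ->
  pullback_bijective (PhiF (@shell_psi C m) n) (PhiF (@fold_psi C m) n).
Proof.
elim: n => [|n IH] hn; first exact: pullback_bijective_id.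
exact: (pullback_bijective_comp (pullback_bijective_PsiF hn) (IH (ltnW hn))).
Qed.
End Iterates.

Lemma pullback_bijective_Phi m : pullback_bijective (@shell_Phi C m) (@Phi C m).
Proof.
have hpsi j : 1 <= j <= m -> pullback_bijective (@shell_psi C m j) (@fold_psi C m j).
  by case: m => [|k] hj; [lia | exact: pullback_bijective_psi].
exact (pullback_bijective_PhiF hpsi (leqnn m.+1)).
Qed.
End Folding.

Theorem theorem8p5 (C : cubcat) (m : nat) :
  (forall x : cell C m.+1,
      is_shell (bdry x) /\ shell_eq (shell_Phi (bdry x)) (bdry (Phi x))) /\
  (forall (z : sh C m) (y : cell C m.+1),
      is_shell z ->
      (exists x0 : cell C m.+1, y = Phi x0) ->
      shell_eq (shell_Phi z) (bdry y) ->
      exists! x : cell C m.+1, shell_eq (bdry x) z /\ Phi x = y).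
Proof.
have [_ Phi_bdry _ Phi_inj Phi_surj] := pullback_bijective_Phi C m.
split=> [x | z y hz _ e]; first by split; [exact: bdry_is_shell | exact: Phi_bdry].
have [x [ex hx]] := Phi_surj z y hz e.
exists x; split=> // x' [ex' hx'].
by apply: Phi_inj; [exact: shell_eq_trans ex (shell_eq_sym ex') | rewrite hx hx'].
Qed.
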